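(* Let $k$ be a field, $X$ a non-empty set, and for every $a\in X$ let $\sigma_a,\tau_a:X\to X$ be maps. Let ${\cal A}$ be the basic set-theoretic Yang–Baxter algebra associated with these data, i.e. the unital associative $k$-algebra generated by $1_{\cal A}$, $h_a$, $w_a$, $w_a^{-1}$ ($a\in X$) subject to the relations, for all $a,b\in X$, \[h_ah_b=\delta_{a,b}h_a,\quad w_a^{-1}w_a=w_aw_a^{-1}=1_{\cal A},\quad w_aw_b=w_{\sigma_a(b)}w_{\tau_b(a)},\quad w_ah_b=h_{\sigma_a(b)}w_a.\] Then for all $a,b,c\in X$, \[h_{\sigma_{\sigma_a(b)}(\sigma_{\tau_b(a)}(c))}=h_{\sigma_a(\sigma_b(c))}.\] If, in addition, $h_a=h_b$ implies $a=b$ for all $a,b\in X$, then for all $a,b,c\in X$, \[\sigma_a(\sigma_b(c))=\sigma_{\sigma_a(b)}(\sigma_{\tau_b(a)}(c)),\] and each $\sigma_a:X\to X$ is injective. *)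

From HB Require Import structures.
From mathcomp Require Import all_boot all_algebra.
Set Implicit Arguments. Unset Strict Implicit. Unset Printing Implicit Defensive.
Import GRing.Theory.
Local Open Scope ring_scope.

Definition YB_relations (k : fieldType) (X : Type) (sigma tau : X -> X -> X)
  (A : algType k) (h w winv : X -> A) : Prop :=
  [/\ (forall a, h a * h a = h a),
      (forall a b, a <> b -> h a * h b = 0),
      (forall a, winv a * w a = 1 /\ w a * winv a = 1),
      (forall a b, w a * w b = w (sigma a b) * w (tau b a)) &
      (forall a b, w a * h b = h (sigma a b) * w a)].

(* Conjugation by the invertible w_a sends h_c to h_(sigma_a c).  Hence w_a w_b h_c
   equals h_(sigma_a (sigma_b c)) w_a w_b, and, after the braid relation
   w_a w_b = w_(sigma_a b) w_(tau_b a), also h_(sigma_(sigma_a b) (sigma_(tau_b a) c)) w_a w_b;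
   cancelling the invertible w_a w_b gives the identity.  Conjugating back by w_a shows
   that h_(sigma_a b) determines h_b. *)

From HB Require Import structures.
From mathcomp Require Import all_boot all_algebra.

Set Implicit Arguments.
Unset Strict Implicit.
Unset Printing Implicit Defensive.
Local Open Scope ring_scope.
Import GRing.Theory.

Lemma rreg_rinv (R : pzRingType) (x y : R) : x * y = 1 -> GRing.rreg x.
Proof. by move=> xy u v uv; rewrite -(mulr1 u) -(mulr1 v) -xy !mulrA uv. Qed.

Section YangBaxterRelations.

Variables (R : pzRingType) (X : Type) (sigma tau : X -> X -> X).
Variables (h w winv : X -> R).
Hypothesis winv_w : forall a, winv a * w a = 1.
Hypothesis w_winv : forall a, w a * winv a = 1.
Hypothesis w_braid : forall a b, w a * w b = w (sigma a b) * w (tau b a).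
Hypothesis w_h : forall a b, w a * h b = h (sigma a b) * w a.

Lemma winv_h_w a b : winv a * h (sigma a b) * w a = h b.
Proof. by rewrite -mulrA -w_h mulrA winv_w mul1r. Qed.

Lemma ww_h a b c : w a * w b * h c = h (sigma a (sigma b c)) * (w a * w b).
Proof. by rewrite -mulrA w_h mulrA w_h !mulrA. Qed.

Lemma ww_rreg a b : GRing.rreg (w a * w b).
Proof.
apply: (@rreg_rinv _ _ (winv b * winv a)).
by rewrite mulrA -(mulrA (w a)) !w_winv mulr1.
Qed.

Lemma h_sigma_braid a b c :
  h (sigma (sigma a b) (sigma (tau b a) c)) = h (sigma a (sigma b c)).
Proof.
apply: (@ww_rreg a b); rewrite -ww_h.
by rewrite [w a * w b]w_braid ww_h -w_braid.
Qed.

Lemma h_sigma_inj a b c : h (sigma a b) = h (sigma a c) -> h b = h c.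
Proof. by move=> E; rewrite -(winv_h_w a b) -(winv_h_w a c) E. Qed.

End YangBaxterRelations.

Theorem proposition2p2 (k : fieldType) (X : Type) (x0 : X)
  (sigma tau : X -> X -> X) (A : algType k) (h w winv : X -> A) :
  YB_relations sigma tau h w winv ->
  (forall a b c,
     h (sigma (sigma a b) (sigma (tau b a) c)) = h (sigma a (sigma b c))) /\
  ((forall a b, h a = h b -> a = b) ->
     (forall a b c,
        sigma a (sigma b c) = sigma (sigma a b) (sigma (tau b a) c)) /\
     (forall a, injective (sigma a))).
Proof.
case=> _ _ winvP w_braid w_h.
have winv_w a : winv a * w a = 1 by case: (winvP a).
have w_winv a : w a * winv a = 1 by case: (winvP a).
have braid := h_sigma_braid w_winv w_braid w_h.
split=> // h_inj; split=> [a b c | a b c /(congr1 h)].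
  by apply: h_inj; rewrite braid.
by move/(h_sigma_inj winv_w w_h)/h_inj.
Qed.
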